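(* Let $R$ be a commutative ring and let $f,g\in R[[x]]$ be formal power series. For an integer $m\ge1$ write $\ell(m)=\lfloor\log_2 m\rfloor$. Then $$f(x)g(x)=\frac{f(x)\odot g(x)}{1-x}-\sum_{m=1}^{\infty}\frac{1-x^{2^{\ell(m)}}}{(1-x)\,x^m}\,U_m(x)\,V_m(x),$$ where $$U_m(x)=\Bigl(\frac{x^m}{1-x^{2^{\ell(m)+1}}}\Bigr)\odot\Bigl(\bigl(1-x^{2^{\ell(m)}}\bigr)f(x)\Bigr),\qquad V_m(x)=\Bigl(\frac{x^m}{1-x^{2^{\ell(m)+1}}}\Bigr)\odot\Bigl(\bigl(1-x^{2^{\ell(m)}}\bigr)g(x)\Bigr).$$
   Context: For formal power series $P=\sum_i p_ix^i$ and $Q=\sum_i q_ix^i$, the termwise product is $P\odot Q=\sum_i p_iq_ix^i$. Fractions such as $\frac{1}{1-x^{N}}=\sum_{i\ge0}x^{iN}$ are understood in $R[[x]]$; the division by $x^m$ is exact since $U_m,V_m$ are divisible by $x^m$, and the infinite sum converges formally (the $m$-th summand has order at least $m$). *)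

From mathcomp Require Import all_boot all_order all_algebra.
Set Implicit Arguments. Unset Strict Implicit. Unset Printing Implicit Defensive.
Import GRing.Theory.
Local Open Scope ring_scope.

Definition fps (R : Type) := nat -> R.

Section FPS.
Variable R : comPzRingType.

Definition fps_add (P Q : fps R) : fps R := fun n => P n + Q n.
Definition fps_sub (P Q : fps R) : fps R := fun n => P n - Q n.
Definition fps_mul (P Q : fps R) : fps R :=
  fun n => \sum_(i < n.+1) P i * Q (n - i)%N.
Definition fps_had (P Q : fps R) : fps R := fun n => P n * Q n.
Definition fps_one : fps R := fun n => if n == 0%N then 1 else 0.
Definition fps_xpow (N : nat) : fps R := fun n => if n == N then 1 else 0.
(* 1/(1 - x^N) = \sum_{i>=0} x^(iN)  (used for N >= 1) *)
Definition fps_geom (N : nat) : fps R := fun n => if (N %| n)%N then 1 else 0.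
(* exact division by x^m of a series divisible by x^m *)
Definition fps_divX (m : nat) (P : fps R) : fps R := fun n => P (n + m)%N.
Definition fps_sum (a b : nat) (F : nat -> fps R) : fps R :=
  fun n => \sum_(a <= m < b) F m n.
End FPS.

Definition ell (m : nat) : nat := trunc_log 2 m.

Section Formula.
Variable R : comPzRingType.

Definition mask (m : nat) : fps R :=
  fps_mul (fps_xpow R m) (fps_geom R (2 ^ (ell m).+1)).

Definition onemx (m : nat) : fps R := fps_sub (fps_one R) (fps_xpow R (2 ^ ell m)).

Definition Um (f : fps R) (m : nat) : fps R :=
  fps_had (mask m) (fps_mul (onemx m) f).

Definition summand (f g : fps R) (m : nat) : fps R :=
  fps_mul (fps_mul (onemx m) (fps_geom R 1)) (fps_divX m (fps_mul (Um f m) (Um g m))).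

Definition had_over (f g : fps R) : fps R := fps_mul (fps_had f g) (fps_geom R 1).
End Formula.

(* Fix h = 2^L.  For m in [h, 2h) (the m with ell m = L) the masks select one
   residue class mod 2h each, so the x^n-coefficient of the sum of these summands
   is sum_j ((1 - x^h) f)_j w_j, where w_j is a difference of two coefficients of
   g governed by the parities of floor(j/h) and floor((n-j)/h).  Summation by
   parts along the step h turns it into M_(2h)(n) - M_h(n), where
   M_h(n) = sum_(c <= n) f_c g_(h floor((n-c)/h) + c mod h).  The blocks telescope
   from M_1 = f g to M_h(n) = ((f ⊙ g)/(1-x))_n for h > n, and summand m has no
   x^n-coefficient once m > n, which makes the infinite sum formal. *)

From Pilot Require Import Defs.
From mathcomp Require Import all_boot all_order all_algebra zify ring.
Import GRing.Theory.

Lemma eq_modn_dvd_sub [P i : nat] (k : nat) : i < P ->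
  ((i <= k) && (P %| k - i)) = (i == k %% P).
Proof.
move=> ltiP; apply/idP/eqP => [/andP[leik /dvdnP[q Ekq]] | ->].
  by rewrite -(subnK leik) Ekq modnMDl modn_small.
by rewrite leq_mod; apply/dvdnP; exists (k %/ P); rewrite {1}(divn_eq k P) addnK.
Qed.

Lemma modn_mul2 (h c : nat) : 0 < h -> c %% (h * 2) = c %% h + odd (c %/ h) * h.
Proof.
move=> h_gt0; have ltr := ltn_pmod c h_gt0.
have Ec : c = (c %/ h)./2 * (h * 2) + (c %% h + odd (c %/ h) * h).
  rewrite {1}(divn_eq c h) -{1}(odd_double_half (c %/ h)) -muln2.
  by move: (odd _) (_./2) => o q; ring.
by rewrite {1}Ec modnMDl modn_small //; case: odd; lia.
Qed.

Lemma divn_mul2 (h c : nat) : c %/ (h * 2) = (c %/ h)./2.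
Proof. by rewrite divnMA divn2. Qed.

Lemma ell_ltn m : m < 2 ^ (ell m).+1.
Proof. exact: trunc_log_ltn. Qed.

Lemma ell_eq L m : 2 ^ L <= m < 2 ^ L.+1 -> ell m = L.
Proof. exact: trunc_log_eq. Qed.

Local Open Scope ring_scope.

Section BigSums.
Variable V : nmodType.

Lemma sum_window_residue (P h N : nat) (F : nat -> V) : (h <= P)%N ->
  \sum_(i < N.+1) (if ((i < h) && (P %| N - i))%N then F i else 0) =
  if (N %% P < h)%N then F (N %% P)%N else 0.
Proof.
move=> lehP; rewrite (eq_bigr (fun i : 'I_N.+1 =>
  if (i == N %% P :> nat)%N then (if (N %% P < h)%N then F i else 0) else 0)).
  rewrite -big_mkcond (big_ord1_eq _ (fun i => if (N %% P < h)%N then F i else 0)).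
  by rewrite ltnS leq_mod.
move=> i _; have leiN : (i <= N)%N by rewrite -ltnS.
case: (ltnP i h) => [ltih | lehi]; last first.
  by case: (nat_of_ord i =P N %% P)%N => // Ei; rewrite -Ei ltnNge lehi.
have := eq_modn_dvd_sub N (leq_trans ltih lehP); rewrite leiN /= => ->.
by case: (nat_of_ord i =P N %% P)%N => // <-; rewrite ltih.
Qed.

Lemma exchange_big_triangle n (F : nat -> nat -> V) :
  \sum_(i < n.+1) \sum_(j < (n - i).+1) F i j =
  \sum_(j < n.+1) \sum_(i < (n - j).+1) F i j.
Proof.
have tri k (G : nat -> V) : (k <= n)%N ->
    \sum_(j < (n - k).+1) G j = \sum_(j < n.+1) (if (k + j <= n)%N then G j else 0).
  move=> lekn; rewrite (big_ord_widen _ _ (_ : (n - k).+1 <= n.+1)%N) ?ltnS ?leq_subr //.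
  by rewrite big_mkcond; apply: eq_bigr => j _; rewrite ltnS leq_subRL.
rewrite (eq_bigr _ (fun (i : 'I_n.+1) _ => tri i (F i) (ltn_ord i))) exchange_big.
apply: eq_bigr => j _; rewrite (tri j (F^~ j) (ltn_ord j)).
by apply: eq_bigr => i _; rewrite addnC.
Qed.

Lemma sum_shift h N (Y : nat -> V) :
  \sum_(j < N) (if (h <= j)%N then Y j else 0) =
  \sum_(c < N) (if (c + h < N)%N then Y (c + h)%N else 0).
Proof.
have -> : \sum_(j < N) (if (h <= j)%N then Y j else 0) = \sum_(h <= j < N) Y j.
  by rewrite big_geq_mkord [RHS]big_mkcond.
have -> : \sum_(c < N) (if (c + h < N)%N then Y (c + h)%N else 0) =
          \sum_(c < N - h) Y (c + h)%N.
  rewrite (big_ord_widen N (fun c => Y (c + h)%N)) ?leq_subr // [RHS]big_mkcond.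
  by apply: eq_bigr => c _; rewrite ltn_subRL addnC.
by rewrite -[in LHS](add0n h) big_addn big_mkord.
Qed.

End BigSums.

Section Coefficients.
Variable R : comPzRingType.
Implicit Types (a f g : fps R).

Definition bdiff (h : nat) a : fps R :=
  fun j => a j - (if (h <= j)%N then a (j - h)%N else 0).

Lemma fps_mulBl (P Q S : fps R) n :
  fps_mul (fps_sub P Q) S n = fps_mul P S n - fps_mul Q S n.
Proof. by rewrite -sumrB; apply: eq_bigr => i _; rewrite mulrBl. Qed.

Lemma fps_mul_xpowl N a n :
  fps_mul (fps_xpow R N) a n = if (N <= n)%N then a (n - N)%N else 0.
Proof.
rewrite /fps_mul /fps_xpow
  (eq_bigr (fun i : 'I_n.+1 => if i == N :> nat then a (n - i)%N else 0)).
  by rewrite -big_mkcond (big_ord1_eq _ (fun i => a (n - i)%N)).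
by move=> i _; case: eqP; rewrite ?mul1r ?mul0r.
Qed.

Lemma onemx_mulE m a n : fps_mul (onemx R m) a n = bdiff (2 ^ ell m) a n.
Proof. by rewrite fps_mulBl (fps_mul_xpowl 0) fps_mul_xpowl subn0. Qed.

Lemma onemx_geomE m i :
  fps_mul (onemx R m) (fps_geom R 1) i = if (i < 2 ^ ell m)%N then 1 else 0.
Proof.
by rewrite onemx_mulE /bdiff /fps_geom !dvd1n ltnNge; case: leqP; rewrite ?subrr ?subr0.
Qed.

Lemma maskE m j : Defs.mask R m j = if (j %% 2 ^ (ell m).+1 == m)%N then 1 else 0.
Proof.
rewrite /Defs.mask fps_mul_xpowl /fps_geom eq_sym -(eq_modn_dvd_sub _ (ell_ltn m)).
by case: (m <= j)%N.
Qed.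

Lemma UmE f m j :
  Um f m j = if (j %% 2 ^ (ell m).+1 == m)%N then bdiff (2 ^ ell m) f j else 0.
Proof. by rewrite /Um /fps_had maskE onemx_mulE; case: eqP; rewrite ?mul1r ?mul0r. Qed.

Lemma Um_mulE f g m k :
  fps_mul (Um f m) (Um g m) (k + m)%N =
  \sum_(j < k.+1)
    (if ((j %% 2 ^ (ell m).+1 == m) && (2 ^ (ell m).+1 %| k - j))%N
     then bdiff (2 ^ ell m) f j * bdiff (2 ^ ell m) g (k + m - j)%N else 0).
Proof.
set P := (2 ^ (ell m).+1)%N; set h := (2 ^ ell m)%N.
rewrite /fps_mul -addSn big_split_ord /= [X in _ + X]big1 ?addr0 => [|i _].
  apply: eq_bigr => j _; rewrite !UmE -/P -/h.
  have lejk : (j <= k)%N := ltn_ord j.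
  have -> : ((k + m - j) %% P == m)%N = (P %| k - j)%N.
    rewrite -addnBAC // -{2}(modn_small (ell_ltn m)) -{2}(add0n m) eqn_modDr.
    by rewrite mod0n.
  by case: (_ == m)%N; case: (P %| _)%N; rewrite ?mulr0 ?mul0r.
rewrite !UmE; case: (_ == m)%N; case: eqP => // Ekm; rewrite ?mulr0 ?mul0r //.
by exfalso; have := ltn_ord i; have := leq_mod (k + m - (k.+1 + i)) P; rewrite Ekm; lia.
Qed.

Lemma summandE f g m n :
  summand f g m n =
  \sum_(j < n.+1)
    (if ((j %% 2 ^ (ell m).+1 == m) && ((n - j) %% 2 ^ (ell m).+1 < 2 ^ ell m))%N
     then bdiff (2 ^ ell m) f j *
          bdiff (2 ^ ell m) g ((n - j) %/ 2 ^ (ell m).+1 * 2 ^ (ell m).+1 + m)%N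
     else 0).
Proof.
set P := (2 ^ (ell m).+1)%N; set h := (2 ^ ell m)%N.
have lehP : (h <= P)%N by rewrite /P expnS leq_pmull.
pose F i j := (if (i < h)%N then 1 else 0) *
  (if ((j %% P == m) && (P %| n - i - j))%N
   then bdiff h f j * bdiff h g (n - i + m - j)%N else 0).
transitivity (\sum_(i < n.+1) \sum_(j < (n - i).+1) F i j).
  by apply: eq_bigr => i _; rewrite onemx_geomE /fps_divX Um_mulE mulr_sumr.
rewrite exchange_big_triangle; apply: eq_bigr => j _.
have lejn : (j <= n)%N := ltn_ord j.
rewrite {}/F; case: (j %% P == m)%N; last by rewrite big1 // => i _; rewrite mulr0.
pose G i := bdiff h g (n - j - i + m)%N.
transitivity (bdiff h f j *
  \sum_(i < (n - j).+1) (if ((i < h) && (P %| n - j - i))%N then G i else 0)).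
  rewrite mulr_sumr; apply: eq_bigr => i _; rewrite /G /=.
  have leinj : (i <= n - j)%N := ltn_ord i.
  rewrite subnAC (_ : n - i + m - j = n - j - i + m)%N; last by lia.
  by case: (i < h)%N; case: (P %| _)%N; rewrite ?mul1r ?mul0r ?mulr0.
rewrite sum_window_residue // /G {2}(divn_eq (n - j) P) addnK /=.
by case: (_ < h)%N; rewrite ?mulr0.
Qed.

Lemma summand_eq0 f g m n : (n < m)%N -> summand f g m n = 0.
Proof.
move=> ltnm; rewrite summandE big1 // => j _.
case: eqP => //= Ejm; exfalso.
by have := leq_mod j (2 ^ (ell m).+1); rewrite Ejm; have := ltn_ord j; lia.
Qed.

Lemma bdiff_step h a k r :
  bdiff h a (h * k.+1 + r)%N = a (h * k.+1 + r)%N - a (h * k + r)%N.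
Proof. by rewrite /bdiff mulnS -addnA leq_addr addKn. Qed.

Lemma sum_bdiff_mul h N a (X : nat -> R) :
  \sum_(j < N) bdiff h a j * X j =
  \sum_(c < N) a c * (X c - (if (c + h < N)%N then X (c + h)%N else 0)).
Proof.
pose Y j := a (j - h)%N * X j.
transitivity (\sum_(j < N) (a j * X j - (if (h <= j)%N then Y j else 0))).
  by apply: eq_bigr => j _; rewrite /bdiff /Y mulrBl; case: leqP; rewrite ?mul0r.
rewrite sumrB sum_shift -sumrB; apply: eq_bigr => c _.
by rewrite /Y addnK mulrBr; case: ifP; rewrite ?mulr0.
Qed.

Definition block_coef (h n : nat) g (j : nat) : R :=
  if odd (j %/ h) && ~~ odd ((n - j) %/ h)
  then bdiff h g (h * ((n - j) %/ h).+1 + j %% h)%N else 0.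

Lemma block_coefE h n g j : (0 < h)%N ->
  (if ((h <= j %% (h * 2)) && ((n - j) %% (h * 2) < h))%N
   then bdiff h g ((n - j) %/ (h * 2) * (h * 2) + j %% (h * 2))%N else 0) =
  block_coef h n g j.
Proof.
move=> h_gt0; rewrite /block_coef !modn_mul2 // divn_mul2.
have ltjh := ltn_pmod j h_gt0; have ltnjh := ltn_pmod (n - j) h_gt0.
have -> : (h <= j %% h + odd (j %/ h) * h)%N = odd (j %/ h) by case: odd; lia.
have -> : ((n - j) %% h + odd ((n - j) %/ h) * h < h)%N = ~~ odd ((n - j) %/ h).
  by case: odd; lia.
case: ifP => // /andP[-> /even_halfK Eb] /=; congr (bdiff _ _ _).
by rewrite mulnCA muln2 Eb mulnS; lia.
Qed.

Lemma block_coef_sub h n g c : (0 < h)%N -> (c <= n)%N ->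
  block_coef h n g c - (if (c + h < n.+1)%N then block_coef h n g (c + h) else 0) =
  g (h * 2 * ((n - c) %/ (h * 2)) + c %% (h * 2))%N - g (h * ((n - c) %/ h) + c %% h)%N.
Proof.
move=> h_gt0 lecn.
have divn_ch : ((c + h) %/ h = (c %/ h).+1)%N by rewrite divnDr ?divnn ?h_gt0 ?addn1.
have modn_ch : ((c + h) %% h = c %% h)%N by rewrite modnDr.
have lt_chn : (c + h < n.+1)%N = (0 < (n - c) %/ h)%N.
  by rewrite ltnS leq_divRL // mul1n -leq_subRL.
have divn_nch : ((n - (c + h)) %/ h = ((n - c) %/ h).-1)%N.
  by rewrite subnDA divnBr ?divnn ?h_gt0 ?subn1.
rewrite /block_coef divn_ch modn_ch divn_nch lt_chn modn_mul2 // divn_mul2.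
rewrite -mulnA mul2n halfK.
move: (c %/ h)%N (c %% h)%N ((n - c) %/ h)%N => a r [|b] /=;
  [case: (odd a) | case: (odd a); case: (odd b)];
  rewrite /= ?bdiff_step ?subr0 ?sub0r ?oppr0 ?opprB.
all: first [congr (g _ - _) | apply/esym/eqP; rewrite subr_eq0; apply/eqP; congr g]; nia.
Qed.

Definition mixprod (h : nat) f g : fps R :=
  fun n => \sum_(c < n.+1) f c * g (h * ((n - c) %/ h) + c %% h)%N.

Lemma sum_summand_block f g L n :
  \sum_(2 ^ L <= m < 2 ^ L.+1) summand f g m n =
  mixprod (2 ^ L.+1) f g n - mixprod (2 ^ L) f g n.
Proof.
have h_gt0 : (0 < 2 ^ L)%N by rewrite expn_gt0.
transitivity (\sum_(j < n.+1) bdiff (2 ^ L) f j * block_coef (2 ^ L) n g j).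
  under eq_big_nat => m /ell_eq Em do rewrite summandE Em.
  rewrite exchange_big; apply: eq_bigr => j _ /=.
  under eq_bigr => i _ do rewrite if_and eq_sym.
  rewrite -big_mkcond big_nat1_eq -block_coefE // -expnSr ltn_pmod ?expn_gt0 // andbT.
  by rewrite -if_and; case: ifP; rewrite ?mulr0.
rewrite sum_bdiff_mul /mixprod -sumrB expnSr; apply: eq_bigr => c _.
by rewrite block_coef_sub ?mulrBr //; exact: ltn_ord c.
Qed.

Lemma mixprod1 f g n : mixprod 1 f g n = fps_mul f g n.
Proof. by apply: eq_bigr => c _; rewrite divn1 modn1 mul1n addn0. Qed.

Lemma mixprod_had h f g n : (n < h)%N -> mixprod h f g n = had_over f g n.
Proof.
move=> ltnh; apply: eq_bigr => c _; have lecn : (c <= n)%N := ltn_ord c.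
rewrite /fps_had /fps_geom dvd1n mulr1 divn_small ?modn_small ?muln0 //; lia.
Qed.

Lemma sum_summand_pow2 f g K n :
  \sum_(1 <= m < 2 ^ K) summand f g m n = mixprod (2 ^ K) f g n - fps_mul f g n.
Proof.
elim: K => [|K IH]; first by rewrite big_geq // mixprod1 subrr.
rewrite (big_cat_nat _ (n := 2 ^ K)) ?expn_gt0 ?expnS ?leq_pmull //= -expnS.
by rewrite IH sum_summand_block addrC addrA subrK.
Qed.

End Coefficients.

Theorem mainTheorem3 (R : comPzRingType) (f g : fps R) :
  forall n : nat, exists N0 : nat, forall N : nat, (N0 <= N)%N ->
    fps_mul f g n =
    had_over f g n - fps_sum 1 N (summand f g) n.
Proof.
move=> n; exists n.+1 => N ltnN.
have ltN2N : (N < 2 ^ N)%N by rewrite ltn_expl.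
have -> : fps_sum 1 N (summand f g) n = \sum_(1 <= m < 2 ^ N) summand f g m n.
  rewrite /fps_sum [RHS](big_cat_nat _ (n := N)) /=; [|lia|exact: ltnW].
  rewrite [X in _ = _ + X]big1_seq ?addr0 // => m /andP[_].
  by rewrite mem_index_iota => /andP[leNm _]; apply: summand_eq0; lia.
by rewrite sum_summand_pow2 mixprod_had; [rewrite opprB addrC subrK | lia].
Qed.
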